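(* Let $(b_n)_{n=0}^\infty$ be a sequence with $b_n>0$, $b_0=1$ and $b_{n+1}/b_n\ge b$ for all $n$, for some $b>1$. Fix $C>0$. Then for every $\epsilon_0>0$ there is $\delta_0>0$ such that the following holds for every $\delta\in(0,\delta_0)$: if $A\subseteq[0,1]^2$ can be covered by $N\le C/\delta$ squares with horizontal and vertical sides of length $\delta$, then there exist $\gamma$ with $0<\gamma<\min\{1,\tfrac1b+\epsilon_0\}$ and $\tilde C>0$ such that for every sequence $\underline{\Theta}=(\underline{\theta_1},\underline{\theta_2},\dots)$ with $\underline{\theta_j}\in\mathbb{R}^2$ and every $n>0$, $$\mathcal{L}(\mathcal{A}_n(\underline{\Theta}))<\tilde C\gamma^n.$$
   Context: $\mathcal{L}$ denotes Lebesgue measure on $\mathbb{R}^2$. For $A\subseteq[0,1]^2$ let $\mathcal{A}=\bigcup_{n,m\in\mathbb{Z}}(A+(n,m))$. For $j\ge1$ and $\underline{\theta_j}\in\mathbb{R}^2$ let $\frac{\mathcal{A}-\underline{\theta_j}}{b_j}=\{(x,y): (b_jx,b_jy)+\underline{\theta_j}\in\mathcal{A}\}$, and define $$\mathcal{A}_n(\underline{\Theta})=[0,1]^2\cap\mathcal{A}\cap\frac{\mathcal{A}-\underline{\theta_1}}{b_1}\cap\frac{\mathcal{A}-\underline{\theta_2}}{b_2}\cap\dots\cap\frac{\mathcal{A}-\underline{\theta_n}}{b_n}.$$ *)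

From HB Require Import structures.
From mathcomp Require Import all_boot all_order all_algebra.
From mathcomp Require Import all_classical all_reals all_analysis.
Set Implicit Arguments. Unset Strict Implicit. Unset Printing Implicit Defensive.
Import Order.TTheory GRing.Theory Num.Theory.
Local Open Scope classical_set_scope.
Local Open Scope ring_scope.

Definition leb2 {R : realType} :=
  ((@lebesgue_measure R) \x (@lebesgue_measure R))%E.

Definition leb2_outer {R : realType} (S : set (R * R)) : \bar R :=
  ereal_inf [set leb2 B | B in [set B | measurable B /\ S `<=` B]].

Definition unit_square {R : realType} : set (R * R) :=
  [set p | 0 <= p.1 <= 1 /\ 0 <= p.2 <= 1].

Definition square {R : realType} (c : R * R) (d : R) : set (R * R) :=
  [set p | c.1 <= p.1 <= c.1 + d /\ c.2 <= p.2 <= c.2 + d].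

Definition periodize {R : realType} (A : set (R * R)) : set (R * R) :=
  [set p | exists n m : int, A (p.1 - n%:~R, p.2 - m%:~R)].

Definition rescale {R : realType} (S : set (R * R)) (theta : R * R) (beta : R)
  : set (R * R) :=
  [set p | S (beta * p.1 + theta.1, beta * p.2 + theta.2)].

Definition A_n {R : realType} (A : set (R * R)) (b : nat -> R)
  (Theta : nat -> R * R) (n : nat) : set (R * R) :=
  unit_square `&` periodize A `&`
  [set p | forall j : nat, (1 <= j <= n)%N ->
           rescale (periodize A) (Theta j) (b j) p].

(* Cover A by N <= C/delta squares of side delta and pick the least m with
   delta bb^m >= 1, so that b_{(k+1)m} >= b_{km} / delta.  A square of side s
   with b_{km} s >= 1, intersected with (Acal - theta)/b_{km}, is covered by at
   most N (b_{km} s + 3)^2 <= 16 N (b_{km} s)^2 squares of side delta/b_{km},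
   and b_{(k+1)m} times that side is again >= 1.  Iterating over the
   ceil(n/m) blocks gives L(A_n) <= (16 N delta^2)^ceil(n/m).  Since N delta <= C
   and delta is about bb^-m, we get 16 N delta^2 <= 16 C delta <= gamma^m for any
   gamma > 1/bb once delta is small, hence L(A_n) <= gamma^n. *)

From HB Require Import structures.
From mathcomp Require Import all_boot all_order all_algebra.
From mathcomp Require Import all_classical all_reals all_analysis.
From mathcomp Require Import ring lra.
Set Implicit Arguments.
Unset Strict Implicit.
Unset Printing Implicit Defensive.

Import Order.TTheory GRing.Theory Num.Theory.
Local Open Scope classical_set_scope.
Local Open Scope ring_scope.

Section LebesgueBound.
Variable R : realType.
Implicit Types (S T : set (R * R)) (v w s : R) (q : R * R).

(* A measurable superset of measure at most v: unlike leb2_outer, such bounds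
   add up over finite unions without any approximation argument. *)
Definition leb2_cover S v :=
  exists B, [/\ measurable B, S `<=` B & (leb2 B <= v%:E)%E].

Lemma leb2_outer_le_cover S v : leb2_cover S v -> (leb2_outer S <= v%:E)%E.
Proof.
by move=> [B [mB SB lB]]; apply: le_trans lB; apply: ereal_inf_lbound; exists B.
Qed.

Lemma sub_leb2_cover S T v w :
  S `<=` T -> v <= w -> leb2_cover T v -> leb2_cover S w.
Proof.
move=> ST vw [B [mB TB lB]]; exists B; split => //; first exact: subset_trans TB.
by apply: le_trans lB _; rewrite lee_fin.
Qed.

Lemma lebesgue_measure_itvcc_len (a s : R) : 0 <= s ->
  lebesgue_measure (`[a, a + s]%classic : set R) = s%:E.
Proof.
rewrite le_eqVlt => /predU1P[<-|s0].
  by rewrite addr0 lebesgue_measure_itv /= ltxx.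
by rewrite lebesgue_measure_itv /= lte_fin ltrDl s0 -EFinB addrC addKr.
Qed.

Lemma square_setX q s : square q s = `[q.1, q.1 + s] `*` `[q.2, q.2 + s].
Proof. by apply/seteqP; split => p; rewrite /square /= !in_itv. Qed.

Lemma leb2_cover_square q s : 0 <= s -> leb2_cover (square q s) (s ^+ 2).
Proof.
move=> s0; exists (square q s); split => //.
  by rewrite square_setX; apply: measurableX; apply: measurable_itv.
rewrite square_setX /leb2 product_measure1E; try exact: measurable_itv.
change (lebesgue_measure (`[q.1, (q.1 + s)%R]%classic : set R) *
  lebesgue_measure (`[q.2, (q.2 + s)%R]%classic : set R) <= (s ^+ 2)%R%:E)%E.
by rewrite !lebesgue_measure_itvcc_len // -EFinM expr2.
Qed.

Lemma leb2_cover_bigsetU (I : Type) (r : seq I) (F : I -> set (R * R)) v :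
  (forall i, leb2_cover (F i) v) ->
  leb2_cover (\big[setU/set0]_(i <- r) F i) ((size r)%:R * v).
Proof.
move=> Fv; elim: r => [|i r [B [mB rB lB]]].
  exists set0; rewrite big_nil /leb2 measure0 mul0r; split => //.
have [Bi [mBi iBi lBi]] := Fv i.
exists (Bi `|` B); split; first exact: measurableU.
  by rewrite big_cons; apply: setUSS.
apply: le_trans (measureU2 leb2 mBi mB) _.
by rewrite /= -addn1 natrD mulrDl mul1r addrC EFinD leeD.
Qed.

Lemma leb2_cover_bigcup (I : finType) (F : I -> set (R * R)) v :
  (forall i, leb2_cover (F i) v) ->
  leb2_cover (\bigcup_(i in [set: I]) F i) (#|I|%:R * v).
Proof.
have -> : [set: I] = [set` enum I] by apply/seteqP; split => i; rewrite /= mem_enum.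
by rewrite bigcup_seq cardE; apply: leb2_cover_bigsetU.
Qed.

(* (c + n - t) / be is the left end of the preimage of [c, c + dl] + n under
   x |-> be x + t; n runs from the first integer for which this can meet
   [q, q + s]. *)
Definition grid_point (be t c dl q : R) (k : nat) : R :=
  (c + (Num.floor (be * q + t - c - dl) + k%:Z)%:~R - t) / be.

Lemma grid_interval_cover (be t c dl q s x : R) (n : int) :
  0 < be -> dl <= 1 -> q <= x <= q + s ->
  c <= be * x + t - n%:~R <= c + dl ->
  exists k : 'I_(Num.truncn (be * s) + 3),
    grid_point be t c dl q k <= x <= grid_point be t c dl q k + dl / be.
Proof.
move=> be0 dl1 /andP[qx xqs] /andP[cx xc].
set lo := Num.floor (be * q + t - c - dl).
have lo_le : lo%:~R <= be * q + t - c - dl by apply: floor_le.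
have lo_gt : be * q + t - c - dl < lo%:~R + 1 by rewrite -intrD1 floorD1_gt.
have bqx : be * q <= be * x by rewrite ler_pM2l.
have bxs : be * x <= be * q + be * s by rewrite -mulrDr ler_pM2l.
have bs_lt := truncnS_gt (be * s).
rewrite -addn1 natrD in bs_lt.
have lo_n : 0 <= n - lo by rewrite subr_ge0 -(ler_int R); lra.
have kM : (`|n - lo|%N < Num.truncn (be * s) + 3)%N.
  rewrite -(ltr_nat R) natr_absz ger0_norm // natrD intrB.
  have -> : (3%N%:R : R) = 3 by []; lra.
exists (Ordinal kM); rewrite /grid_point /=.
have -> : lo + `|n - lo|%N = n by rewrite gez0_abs // addrCA subrr addr0.
by rewrite -mulrDl ler_pdivrMr // ler_pdivlMr // ![_ * be]mulrC; apply/andP; split; lra.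
Qed.

Lemma square_rescale_cover (A : set (R * R)) (N : nat) (c : 'I_N -> R * R)
    (dl be s : R) (t q : R * R) :
  0 < be -> dl <= 1 -> A `<=` \bigcup_(i in setT) square (c i) dl ->
  let M := (Num.truncn (be * s) + 3)%N in
  square q s `&` rescale (periodize A) t be `<=`
  \bigcup_(x in [set: 'I_N * 'I_M * 'I_M])
    square (grid_point be t.1 (c x.1.1).1 dl q.1 x.1.2,
            grid_point be t.2 (c x.1.1).2 dl q.2 x.2) (dl / be).
Proof.
move=> be0 dl1 Acov M p [[qp1 qp2] [n [m /Acov [i _ [cp1 cp2]]]]].
have [k1 hk1] := grid_interval_cover be0 dl1 qp1 cp1.
have [k2 hk2] := grid_interval_cover be0 dl1 qp2 cp2.
by exists (i, k1, k2).
Qed.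

Lemma truncn_add3_le (x : R) : 1 <= x -> ((Num.truncn x + 3)%N%:R <= 4 * x).
Proof.
move=> x1; have : (Num.truncn x)%:R <= x by rewrite truncn_le; lra.
by rewrite natrD (_ : 3%N%:R = 3 :> R) //; lra.
Qed.

Definition rescaled_cap (S : set (R * R)) (be : nat -> R) (ta : nat -> R * R)
    (K : nat) : set (R * R) :=
  [set p | forall k, (k < K)%N -> rescale S (ta k) (be k) p].

Lemma rescaled_capS S be ta K :
  rescaled_cap S be ta K.+1 =
  rescale S (ta 0%N) (be 0%N) `&` rescaled_cap S (be \o succn) (ta \o succn) K.
Proof.
apply/seteqP; split => p; first by move=> capp; split=> [|k Kk]; apply: capp.
by move=> [p0 capp] [|k] //; apply: capp.
Qed.

Section CapBound.
Variables (A : set (R * R)) (N : nat) (c : 'I_N -> R * R) (dl : R).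
Hypotheses (dl0 : 0 < dl) (dl1 : dl <= 1)
  (Acov : A `<=` \bigcup_(i in setT) square (c i) dl).

Lemma leb2_cover_square_cap K (be : nat -> R) (ta : nat -> R * R) q s :
  (forall k, 0 < be k) -> (forall k, be k <= dl * be k.+1) ->
  0 < s -> 1 <= be 0%N * s ->
  leb2_cover (square q s `&` rescaled_cap (periodize A) be ta K)
    (s ^+ 2 * (16 * N%:R * dl ^+ 2) ^+ K).
Proof.
elim: K => [|K IH] in be ta q s *; move=> be_gt0 beS s0 bes.
  apply: sub_leb2_cover (leb2_cover_square q (ltW s0)) => //.
  by rewrite expr0 mulr1.
set rho := 16 * N%:R * dl ^+ 2; set s' := dl / be 0%N.
set M := (Num.truncn (be 0%N * s) + 3)%N.
have be0 := be_gt0 0%N.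
have s'0 : 0 < s' by rewrite divr_gt0.
have bes' : 1 <= be 1%N * s'.
  by rewrite /s' mulrA ler_pdivlMr // mul1r mulrC; apply: beS.
pose corner (x : 'I_N * 'I_M * 'I_M) :=
  (grid_point (be 0%N) (ta 0%N).1 (c x.1.1).1 dl q.1 x.1.2,
   grid_point (be 0%N) (ta 0%N).2 (c x.1.1).2 dl q.2 x.2).
have := leb2_cover_bigcup (fun x =>
  IH (be \o succn) (ta \o succn) (corner x) s' (fun k => be_gt0 k.+1)
     (fun k => beS k.+1) s'0 bes').
apply: sub_leb2_cover.
  rewrite rescaled_capS setIA => p [].
  move=> /(square_rescale_cover be0 dl1 Acov) [x _ px] capp.
  by exists x.
have M_le : (M%:R : R) <= 4 * (be 0%N * s) := truncn_add3_le bes.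
have step : N%:R * M%:R * M%:R * s' ^+ 2 <= s ^+ 2 * rho.
  have MM : (M%:R * M%:R : R) <= (4 * (be 0%N * s)) ^+ 2.
    by rewrite expr2; apply: ler_pM.
  have := ler_wpM2r (exprn_ge0 2 (ltW s'0)) MM.
  have -> : (4 * (be 0%N * s)) ^+ 2 * s' ^+ 2 = 16 * s ^+ 2 * dl ^+ 2.
    by rewrite /s'; field; rewrite gt_eqF.
  move=> h; have := ler_wpM2l (ler0n _ N) h.
  by rewrite /rho !mulrA => h'; lra.
rewrite -/rho !card_prod !card_ord !natrM mulrA [rho ^+ K.+1]exprS mulrA.
have rho0 : 0 <= rho by rewrite /rho !mulr_ge0 // ltW.
by apply: ler_wpM2r step; apply: exprn_ge0.
Qed.

End CapBound.

Lemma exists_expr_ge (x y : R) : 1 < x -> exists n, y <= x ^+ n.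
Proof.
move=> x1; have linear_le n : 1 + n%:R * (x - 1) <= x ^+ n.
  elim: n => [|n IHn]; first by rewrite mul0r addr0 expr0.
  have xn1 : 1 <= x ^+ n by apply: exprn_ege1; lra.
  rewrite exprSr -addn1 natrD; nra.
exists (Num.truncn (y / (x - 1))).+1.
have := truncnS_gt (y / (x - 1)); rewrite ltr_pdivrMr; last by lra.
by have := linear_le (Num.truncn (y / (x - 1))).+1; lra.
Qed.

Lemma exists_expr_bracket (x y : R) : 1 < y -> 0 < x -> x < 1 ->
  exists m, x * y ^+ m < 1 <= x * y ^+ m.+1.
Proof.
move=> y1 x0 x1.
have [M yM] := exists_expr_ge x^-1 y1.
have exP : exists k, 1 <= x * y ^+ k by exists M; rewrite -ler_pdivrMl // mulr1.
case: (ex_minnP exP) => -[|m] hm hmin; first by move: hm; rewrite expr0 mulr1; lra.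
exists m; rewrite hm andbT ltNge; apply/negP => /hmin; by rewrite ltnn.
Qed.

Lemma geometric_growth (b : nat -> R) (bb : R) :
  0 <= bb -> (forall n, 0 < b n) -> (forall n, bb <= b n.+1 / b n) ->
  forall j t, bb ^+ t * b j <= b (j + t)%N.
Proof.
move=> bb0 b_gt0 bS j; elim=> [|t IH]; first by rewrite expr0 mul1r addn0.
have := bS (j + t)%N; rewrite addnS ler_pdivlMr // => le_bS.
by apply: le_trans le_bS; rewrite exprSr mulrAC [bb * _]mulrC ler_wpM2r.
Qed.

Lemma block_length (bb g c0 delta : R) (M0 : nat) :
  1 < bb -> bb^-1 < g -> 0 < c0 -> c0 * bb <= (g * bb) ^+ M0 ->
  0 < delta -> delta * bb ^+ M0 < 1 ->
  exists2 m, (0 < m)%N & 1 <= delta * bb ^+ m /\ c0 * delta <= g ^+ m.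
Proof.
move=> bb1 gbb c00 c0M0 delta0 deltaM0.
have bb0 : 0 < bb by lra.
have gbb1 : 1 < g * bb by rewrite -ltr_pdivrMr // mul1r.
have g0 : 0 < g by apply: lt_trans gbb; rewrite invr_gt0.
have bbM0 : 1 <= bb ^+ M0 by apply: exprn_ege1; lra.
have delta1 : delta < 1 by nra.
have [m /andP[below above]] := exists_expr_bracket bb1 delta0 delta1.
exists m.+1 => //; split => //.
have M0m : (M0 <= m)%N.
  rewrite leqNgt; apply/negP => mM0.
  have : bb ^+ m.+1 <= bb ^+ M0 by apply: ler_weXn2l => //; lra.
  by move/(ler_wpM2l (ltW delta0)); lra.
have bbm : 0 < bb ^+ m by apply: exprn_gt0.
have c0gm : c0 * bb <= g ^+ m * bb ^+ m.
  rewrite -exprMn; apply: le_trans c0M0 _; apply: ler_weXn2l => //; lra.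
have : c0 * (delta * bb ^+ m) < c0 * 1 by rewrite ltr_pM2l.
rewrite mulr1 -(ltr_pM2r bb0) mulrA => /lt_le_trans/(_ c0gm).
rewrite mulrAC ltr_pM2r // exprSr => lt_gm.
have gm0 : 0 < g ^+ m by apply: exprn_gt0.
have : g ^+ m * 1 < g ^+ m * (g * bb) by rewrite ltr_pM2l.
rewrite mulr1 mulrA => /(lt_trans lt_gm).
by rewrite ltr_pM2r // => /ltW.
Qed.

Lemma A_n_sub_square_cap (A : set (R * R)) (b : nat -> R) (Theta : nat -> R * R)
    (n m : nat) :
  b 0%N = 1 -> (0 < m)%N ->
  A_n A b Theta n `<=` square (0, 0) 1 `&`
    rescaled_cap (periodize A) (fun k => b (k * m)%N)
      (fun k => if k is 0 then (0, 0) else Theta (k * m)%N) (n %/ m).+1.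
Proof.
move=> b0 m0 p [[Up Ap] Jp]; split; first by move: Up; rewrite /square /= !add0r.
move=> [|k] kn; first by rewrite /rescale mul0n b0 /= !mul1r !addr0.
apply: Jp; rewrite muln_gt0 m0 /=; apply: leq_trans (leq_divM n m).
by rewrite leq_mul2r -ltnS kn orbT.
Qed.

Lemma leb2_outer_A_n_le (A : set (R * R)) (N : nat) (c : 'I_N -> R * R)
    (b : nat -> R) (bb delta : R) (Theta : nat -> R * R) (n m : nat) :
  0 <= bb -> (forall k, 0 < b k) -> b 0%N = 1 -> (forall k, bb <= b k.+1 / b k) ->
  0 < delta -> delta <= 1 -> A `<=` \bigcup_(i in setT) square (c i) delta ->
  (0 < m)%N -> 1 <= delta * bb ^+ m ->
  (leb2_outer (A_n A b Theta n) <= ((16 * N%:R * delta ^+ 2) ^+ (n %/ m).+1)%:E)%E.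
Proof.
move=> bb0 b_gt0 b0 bS delta0 delta1 Acov m0 bbm.
have b_step k : b (k * m)%N <= delta * b (k.+1 * m)%N.
  have := geometric_growth bb0 b_gt0 bS (k * m) m.
  rewrite mulSn addnC; have := b_gt0 (k * m)%N; nra.
have b0_ge1 : 1 <= b (0 * m)%N * 1 by rewrite mul0n b0 mulr1.
have := leb2_cover_square_cap delta0 delta1 Acov (n %/ m).+1
  (fun k => if k is 0 then (0, 0) else Theta (k * m)%N) (0, 0)
  (fun k => b_gt0 (k * m)%N) b_step ltr01 b0_ge1.
move/(sub_leb2_cover (A_n_sub_square_cap (Theta := Theta) (n := n) b0 m0) (lexx _)).
by rewrite expr1n mul1r => /leb2_outer_le_cover.
Qed.

Lemma ler_expr_ceil (rho g : R) (n m : nat) :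
  0 <= rho -> rho <= g ^+ m -> 0 < g -> g <= 1 -> (0 < m)%N ->
  rho ^+ (n %/ m).+1 <= g ^+ n.
Proof.
move=> rho0 rho_le g0 g1 m0.
apply: le_trans (_ : (g ^+ m) ^+ (n %/ m).+1 <= _).
  by apply: lerXn2r => //; rewrite nnegrE // exprn_ge0 // ltW.
rewrite -exprM; apply: ler_wiXn2l; [exact: ltW | exact: g1 |].
by rewrite mulnC ltnW // ltn_ceil.
Qed.

End LebesgueBound.

Theorem lemma2p3 (R : realType) (b : nat -> R) (bb C : R) :
  1 < bb ->
  (forall n, 0 < b n) -> b 0%N = 1 ->
  (forall n, bb <= b n.+1 / b n) ->
  0 < C ->
  forall eps0 : R, 0 < eps0 ->
  exists2 delta0 : R, 0 < delta0 &
  forall delta : R, 0 < delta -> delta < delta0 ->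
  forall A : set (R * R), A `<=` unit_square ->
  (exists N : nat, N%:R <= C / delta /\
     exists c : 'I_N -> R * R, A `<=` \bigcup_(i in setT) square (c i) delta) ->
  exists gamma : R, exists Ct : R,
    [/\ 0 < gamma, gamma < Num.min 1 (bb^-1 + eps0), 0 < Ct &
     forall (Theta : nat -> R * R) (n : nat), (0 < n)%N ->
       (leb2_outer (A_n A b Theta n) < (Ct * gamma ^+ n)%:E)%E].
Proof.
move=> bb1 b_gt0 b0 bS C0 eps0 eps00.
set mn := Num.min 1 (bb^-1 + eps0).
have bbVmn : bb^-1 < mn by rewrite lt_min invf_lt1 /=; lra.
have mn1 : mn <= 1 by rewrite ge_min lexx.
pose g := (bb^-1 + mn) / 2.
have bbVg : bb^-1 < g by rewrite /g; lra.
have g0 : 0 < g by apply: lt_trans bbVg; rewrite invr_gt0; lra.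
have gbb1 : 1 < g * bb by rewrite -ltr_pdivrMr ?mul1r //; lra.
have [M0 CM0] := exists_expr_ge (16 * C * bb) gbb1.
have bbM0 : 1 <= bb ^+ M0 by apply: exprn_ege1; lra.
exists (bb ^+ M0)^-1 => [|delta delta0 deltaM0 A _ [N [NC [c Acov]]]].
  by rewrite invr_gt0; lra.
have deltabb : delta * bb ^+ M0 < 1 by rewrite -ltr_pdivlMr ?mul1r //; lra.
have delta1 : delta <= 1 by nra.
have C16 : 0 < 16 * C by lra.
have [m m0 [bbm Cm]] := block_length bb1 bbVg C16 CM0 delta0 deltabb.
exists g, 2; split => [//||//|Theta n _]; first by rewrite /g; lra.
have rho_le : 16 * N%:R * delta ^+ 2 <= g ^+ m.
  by rewrite ler_pdivlMr // in NC; apply: le_trans Cm; rewrite expr2; nra.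
apply: le_lt_trans (leb2_outer_A_n_le Theta n _ b_gt0 b0 bS delta0 delta1 Acov m0 bbm) _.
  by lra.
rewrite lte_fin; apply: le_lt_trans (_ : g ^+ n < 2 * g ^+ n).
  have rho0 : 0 <= 16 * N%:R * delta ^+ 2 by rewrite !mulr_ge0 // ltW.
  by apply: ler_expr_ceil rho0 rho_le g0 _ m0; rewrite /g; lra.
have gn0 : 0 < g ^+ n by apply: exprn_gt0.
lra.
Qed.
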